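(* For any Banach space $V$ we have $\mathcal{LNE}(V)\le 2\,\mathcal{LE}(V)$.
   Context: For a function $f$ from a subset $X$ of a metric space $(Z,\rho)$ into a Banach space $V$, $L(f)=\sup\{\|f(x)-f(y)\|/\rho(x,y): x\neq y\}$ and $\|f\|_\infty=\sup_{x\in X}\|f(x)\|$. $\mathcal{LE}(V)$ is the infimum of the constants $c$ such that for every metric space $(Z,\rho)$, every $X\subseteq Z$ and every $f:X\to V$ there is an extension $g:Z\to V$ of $f$ with $L(g)\le cL(f)$ ($+\infty$ if none exists). $\mathcal{LNE}(V)$ is the infimum of the constants $c$ such that for every metric space $(Z,\rho)$, every $X\subseteq Z$ and every bounded function $f:X\to V$ there is an extension $g:Z\to V$ of $f$ with $L(g)\le cL(f)$ and $\|g\|_\infty=\|f\|_\infty$ ($+\infty$ if none exists). *)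

From HB Require Import structures.
From mathcomp Require Import all_boot all_order all_algebra.
From mathcomp Require Import all_classical all_reals all_analysis.
Set Implicit Arguments. Unset Strict Implicit. Unset Printing Implicit Defensive.
Import Order.TTheory GRing.Theory Num.Theory.
Import numFieldNormedType.Exports.
Local Open Scope classical_set_scope.
Local Open Scope ring_scope.

Definition is_metric (R : realType) (Z : Type) (rho : Z -> Z -> R) : Prop :=
  (forall x y, rho x y = 0 <-> x = y) /\
  (forall x y, rho x y = rho y x) /\
  (forall x y z, rho x z <= rho x y + rho y z).

(* L(f) for f restricted to X : sup of ||f x - f y|| / rho x y over x <> y in X;
   0 is added to the set so that the sup over an empty/singleton X is 0
   (all ratios are >= 0, so this does not change the sup otherwise). *)
Definition lipc (R : realType) (V : normedModType R) (Z : Type)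
  (rho : Z -> Z -> R) (X : set Z) (f : Z -> V) : \bar R :=
  ereal_sup ([set 0%E] `|`
    [set r | exists x y, [/\ X x, X y, x <> y & r = (`|f x - f y| / rho x y)%:E]]).

Definition supnorm (R : realType) (V : normedModType R) (Z : Type)
  (X : set Z) (f : Z -> V) : \bar R :=
  ereal_sup ([set 0%E] `|` [set (`|f x|)%:E | x in X]).

Definition LE_ok (R : realType) (V : normedModType R) (c : R) : Prop :=
  forall (Z : Type) (rho : Z -> Z -> R), is_metric rho ->
  forall (X : set Z) (f : Z -> V), (lipc rho X f < +oo)%E ->
  exists g : Z -> V, (forall x, X x -> g x = f x) /\
    (lipc rho setT g <= c%:E * lipc rho X f)%E.

Definition LNE_ok (R : realType) (V : normedModType R) (c : R) : Prop :=
  forall (Z : Type) (rho : Z -> Z -> R), is_metric rho ->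
  forall (X : set Z) (f : Z -> V), (supnorm X f < +oo)%E ->
  (lipc rho X f < +oo)%E ->
  exists g : Z -> V, (forall x, X x -> g x = f x) /\
    (lipc rho setT g <= c%:E * lipc rho X f)%E /\
    supnorm setT g = supnorm X f.

(* infimum of admissible constants; +oo if there is none *)
Definition LE (R : realType) (V : normedModType R) : \bar R :=
  ereal_inf [set c%:E | c in [set c : R | 0 <= c /\ LE_ok V c]].

Definition LNE (R : realType) (V : normedModType R) : \bar R :=
  ereal_inf [set c%:E | c in [set c : R | 0 <= c /\ LNE_ok V c]].

(* Extend f by a map g with L(g) <= c L(f), then push g back into the closed
   ball of radius ||f||_oo with the radial retraction.  The retraction is the
   identity on that ball, so the new map still extends f and has sup norm
   exactly ||f||_oo, and it is 2-Lipschitz, so the Lipschitz constant at most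
   doubles. *)
From HB Require Import structures.
From mathcomp Require Import all_boot all_order all_algebra.
From mathcomp Require Import all_classical all_reals all_analysis.
From mathcomp Require Import ring lra.
Set Implicit Arguments. Unset Strict Implicit. Unset Printing Implicit Defensive.
Import Order.TTheory GRing.Theory Num.Theory.
Import numFieldNormedType.Exports.
Local Open Scope classical_set_scope.
Local Open Scope ring_scope.

Section RadialRetraction.
Variables (R : realFieldType) (V : normedModType R) (M : R).
Hypothesis M_ge0 : 0 <= M.

Definition radial_retraction (v : V) : V :=
  if `|v| <= M then v else (M / `|v|) *: v.

Lemma radial_retraction_id (v : V) : `|v| <= M -> radial_retraction v = v.
Proof. by rewrite /radial_retraction => ->. Qed.

Lemma normr_radial_retraction_le (v : V) : `|radial_retraction v| <= M.
Proof.
rewrite /radial_retraction; case: ifPn => //; rewrite -ltNge => M_lt_v.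
have v_gt0 : 0 < `|v| by exact: le_lt_trans M_lt_v.
by rewrite normrZ ger0_norm ?divr_ge0 // divfK // gt_eqF.
Qed.

(* The correction term (M/|u| - 1) u has norm |u| - M <= |u| - |v| <= |u - v|. *)
Lemma dist_radial_retraction_out_in (u v : V) :
  M < `|u| -> `|v| <= M -> `|(M / `|u|) *: u - v| <= 2 * `|u - v|.
Proof.
move=> M_lt_u v_le_M.
have u_gt0 : 0 < `|u| by exact: le_lt_trans M_lt_u.
have -> : (M / `|u|) *: u - v = (u - v) + (M / `|u| - 1) *: u.
  by rewrite scalerBl scale1r [RHS]addrC -addrA addKr.
apply: le_trans (ler_normD _ _) _.
have -> : `|(M / `|u| - 1) *: u| = `|u| - M.
  rewrite normrZ ler0_norm; last by rewrite subr_le0 ler_pdivrMr // mul1r ltW.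
  by rewrite opprB mulrBl mul1r divfK // gt_eqF.
have := ler_dist_dist u v.
rewrite ger0_norm ?subr_ge0; last exact: le_trans v_le_M (ltW M_lt_u).
lra.
Qed.

(* The correction term (M/|u| - M/|v|) v has norm (M/|u|) ||v| - |u|| <= |u - v|. *)
Lemma dist_radial_retraction_out_out (u v : V) :
  M < `|u| -> M < `|v| ->
  `|(M / `|u|) *: u - (M / `|v|) *: v| <= 2 * `|u - v|.
Proof.
move=> M_lt_u M_lt_v.
have u_gt0 : 0 < `|u| by exact: le_lt_trans M_lt_u.
have v_gt0 : 0 < `|v| by exact: le_lt_trans M_lt_v.
set t := M / `|u|.
have t_ge0 : 0 <= t by rewrite divr_ge0 // ltW.
have t_le1 : t <= 1 by rewrite ler_pdivrMr // mul1r ltW.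
have -> : t *: u - (M / `|v|) *: v = t *: (u - v) + (t - M / `|v|) *: v.
  by rewrite scalerBr scalerBl addrA subrK.
apply: le_trans (ler_normD _ _) _.
have -> : `|(t - M / `|v|) *: v| = t * `|(`|v| - `|u|)|.
  rewrite normrZ -[X in _ * X = _](ger0_norm (normr_ge0 v)) -normrM.
  rewrite -[t in RHS](ger0_norm t_ge0) -normrM; congr `|_|.
  by rewrite /t; field; rewrite !gt_eqF.
rewrite normrZ ger0_norm //.
have := ler_wpM2l t_ge0 (ler_dist_dist v u); rewrite distrC.
have := normr_ge0 (u - v); nra.
Qed.

Lemma radial_retraction_lipschitz : 2.-lipschitz radial_retraction.
Proof.
move=> [u v] _ /=; rewrite /radial_retraction.
case: ifPn => u_le_M; case: ifPn => v_le_M; rewrite -?ltNge in u_le_M v_le_M.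
- by rewrite ler_peMl // ler1n.
- by rewrite distrC [`|u - v|]distrC dist_radial_retraction_out_in.
- exact: dist_radial_retraction_out_in.
- exact: dist_radial_retraction_out_out.
Qed.

End RadialRetraction.

Lemma metric_ge0 (R : realType) (Z : Type) (rho : Z -> Z -> R) :
  is_metric rho -> forall x y, 0 <= rho x y.
Proof.
move=> [rho0 [rhoC rho_tri]] x y.
have := rho_tri x y x; rewrite (rhoC y x) (proj2 (rho0 x x) erefl); lra.
Qed.

Section LipschitzConstant.
Variables (R : realType) (Z : Type) (rho : Z -> Z -> R) (X : set Z).

Lemma lipc_ge0 (V : normedModType R) (f : Z -> V) : (0 <= lipc rho X f)%E.
Proof. by apply: ereal_sup_ubound; left. Qed.

Lemma ratio_le_lipc (V : normedModType R) (f : Z -> V) x y :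
  X x -> X y -> x <> y -> ((`|f x - f y| / rho x y)%:E <= lipc rho X f)%E.
Proof. by move=> Xx Xy xy; apply: ereal_sup_ubound; right; exists x, y. Qed.

Lemma lipc_comp_le (V W : normedModType R) (k : R) (phi : V -> W) (g : Z -> V) :
  (forall x y, 0 <= rho x y) -> 0 <= k -> k.-lipschitz phi ->
  (lipc rho X (phi \o g) <= k%:E * lipc rho X g)%E.
Proof.
move=> rho_ge0 k_ge0 phi_lip.
have kE_ge0 : (0 <= k%:E)%E by rewrite lee_fin.
apply: ge_ereal_sup => _ [->|[x [y [Xx Xy xy ->]]]].
  exact: mule_ge0 (lipc_ge0 g).
apply: le_trans (lee_wpmul2l kE_ge0 (ratio_le_lipc g Xx Xy xy)).
rewrite -EFinM lee_fin mulrA ler_wpM2r ?invr_ge0 //.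
exact: (phi_lip (g x, g y)).
Qed.

End LipschitzConstant.

Section SupNorm.
Variables (R : realType) (V : normedModType R) (Z : Type).

Lemma supnorm_ge0 (X : set Z) (f : Z -> V) : (0 <= supnorm X f)%E.
Proof. by apply: ereal_sup_ubound; left. Qed.

Lemma normr_le_supnorm (X : set Z) (f : Z -> V) x :
  X x -> (`|f x|%:E <= supnorm X f)%E.
Proof. by move=> Xx; apply: ereal_sup_ubound; right; exists x. Qed.

Lemma supnorm_le (X : set Z) (f : Z -> V) (M : R) :
  0 <= M -> (forall x, X x -> `|f x| <= M) -> (supnorm X f <= M%:E)%E.
Proof.
by move=> M_ge0 fM; apply: ge_ereal_sup => _ [->|[x Xx <-]]; rewrite lee_fin ?fM.
Qed.

Lemma supnorm_le_extension (X : set Z) (f g : Z -> V) :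
  (forall x, X x -> g x = f x) -> (supnorm X f <= supnorm setT g)%E.
Proof.
move=> gf; apply: ereal_sup_le => _ [->|[x Xx <-]]; first by left.
by right; exists x; rewrite ?gf.
Qed.

End SupNorm.

Lemma LNE_ok_double (R : realType) (V : normedModType R) (c : R) :
  LE_ok V c -> LNE_ok V (2 * c).
Proof.
move=> LE_c Z rho rho_metric X f f_bounded f_lip.
have [g [gf g_lip]] := LE_c Z rho rho_metric X f f_lip.
set M := fine (supnorm X f).
have supnorm_fE : supnorm X f = M%:E.
  by rewrite fineK // ge0_fin_numE // supnorm_ge0.
have M_ge0 : 0 <= M by rewrite -lee_fin -supnorm_fE supnorm_ge0.
have f_le_M x : X x -> `|f x| <= M.
  by move=> Xx; rewrite -lee_fin -supnorm_fE normr_le_supnorm.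
have extends_f x : X x -> (radial_retraction M \o g) x = f x.
  by move=> Xx /=; rewrite gf // radial_retraction_id // f_le_M.
exists (radial_retraction M \o g); split=> //; split.
  have retraction_lip := @radial_retraction_lipschitz _ V M M_ge0.
  have := lipc_comp_le setT g (metric_ge0 rho_metric) _ retraction_lip.
  move=> /(_ (ler0n _ 2)) /le_trans; apply.
  by rewrite EFinM -muleA lee_wpmul2l.
apply/le_anti/andP; split; last exact: supnorm_le_extension.
by rewrite supnorm_fE supnorm_le // => z _; exact: normr_radial_retraction_le.
Qed.

Theorem proposition8p3 (R : realType) (V : completeNormedModType R) :
  (LNE V <= 2%:E * LE V)%E.
Proof.
rewrite /LNE /LE -ereal_inf_pZl // image_comp.
apply: ereal_inf_le_tmp => _ [c [c_ge0 LE_c] <-].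
exists (2 * c); last by rewrite EFinM.
by split; [rewrite mulr_ge0 | exact: LNE_ok_double].
Qed.
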